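(* Let $F,B,H,R,Q\in\mathbb{R}^{2\times 2}$ and consider the target motion model $x_{t+1}=Fx_t+Bu_t+w_t$ with $w_t\sim\mathcal{N}(0,R)$, the measurement model $z_t=Hx_t+v_t$ with $v_t\sim\mathcal{N}(0,Q)$, and the spoofed measurement $\tilde z_t=z_t+\epsilon_t$ with spoofing signal $\epsilon_t\in\mathbb{R}^2$. Let $(m_t,\Sigma_t)_{t\ge 0}$ be produced by the Kalman filter started at $\mathcal{N}(m_0,\Sigma_0)$ and fed the true measurements $z_t$, with Kalman gains $K_t$, and let $(\tilde m_t,\tilde\Sigma_t)_{t\ge0}$ be produced by the Kalman filter started at $\mathcal{N}(\tilde m_0,\tilde\Sigma_0)$ and fed the spoofed measurements $\tilde z_t$, with Kalman gains $\tilde K_t$. Define for $t\ge 1$ $$A_t=F-\tilde K_tHF,\qquad B_t=(K_t-\tilde K_t)\big[z_t-H(Fm_{t-1}+Bu_{t-1})\big],\qquad C_t=-\tilde K_t\epsilon_t .$$ Then for every $t\ge 1$, $$m_t-\tilde m_t=\Big(\prod_{i=0}^{t-1}A_{t-i}\Big)(m_0-\tilde m_0)+\sum_{i=0}^{t-2}\Big(\prod_{j=0}^{i}A_{t-j}\Big)(B_{t-1-i}+C_{t-1-i})+B_t+C_t,$$ where $\prod_{j=0}^{i}A_{t-j}=A_tA_{t-1}\cdots A_{t-i}$.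
   Context: Kalman filter used: given an initial mean $m_0$ and covariance $\Sigma_0$ and measurements $y_1,y_2,\dots$, for $t\ge1$ set $\Sigma_{t|t-1}=F\Sigma_{t-1}F^T+R$, $K_t=\Sigma_{t|t-1}H^T(H\Sigma_{t|t-1}H^T+Q)^{-1}$, $\Sigma_t=(I-K_tH)\Sigma_{t|t-1}$, and the mean update $m_t=(I-K_tH)(Fm_{t-1}+Bu_{t-1})+K_ty_t$. The gains $K_t$ depend only on $\Sigma_0$ and the model matrices, not on the measurements. The filter producing $m_t$ uses $y_t=z_t$ and initial data $(m_0,\Sigma_0)$; the filter producing $\tilde m_t$ uses $y_t=\tilde z_t$ and initial data $(\tilde m_0,\tilde\Sigma_0)$, with its own gains $\tilde K_t$. The control inputs $u_t\in\mathbb{R}^2$ are the same for both filters. *)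

From HB Require Import structures.
From mathcomp Require Import all_boot all_order all_algebra.
From mathcomp Require Import reals.
Set Implicit Arguments. Unset Strict Implicit. Unset Printing Implicit Defensive.
Import Order.TTheory GRing.Theory Num.Theory.
Local Open Scope ring_scope.

Section Kalman.
Variable (R : realType).
Variables (F Bm H Rn Q : 'M[R]_2).

Definition kf_pred (S : 'M[R]_2) : 'M[R]_2 := F *m S *m F^T + Rn.

Definition kf_gain_of (S : 'M[R]_2) : 'M[R]_2 :=
  kf_pred S *m H^T *m invmx (H *m kf_pred S *m H^T + Q).

Fixpoint kf_cov (S0 : 'M[R]_2) (t : nat) : 'M[R]_2 :=
  match t with
  | 0 => S0
  | t'.+1 => (1%:M - kf_gain_of (kf_cov S0 t') *m H) *m kf_pred (kf_cov S0 t')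
  end.

(* K_t for t >= 1 (K_0 := 0, never used) *)
Definition kf_gain (S0 : 'M[R]_2) (t : nat) : 'M[R]_2 :=
  match t with
  | 0 => 0
  | t'.+1 => kf_gain_of (kf_cov S0 t')
  end.

(* m_t, with control inputs u and measurements y (y_t used for t >= 1) *)
Fixpoint kf_mean (S0 : 'M[R]_2) (m0 : 'cV[R]_2) (u y : nat -> 'cV[R]_2) (t : nat)
  : 'cV[R]_2 :=
  match t with
  | 0 => m0
  | t'.+1 => (1%:M - kf_gain S0 t'.+1 *m H) *m (F *m kf_mean S0 m0 u y t' + Bm *m u t')
             + kf_gain S0 t'.+1 *m y t'.+1
  end.
End Kalman.

From HB Require Import structures.
From mathcomp Require Import all_boot all_order all_algebra.
From mathcomp Require Import reals.
Import Order.TTheory GRing.Theory Num.Theory.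
Local Open Scope ring_scope.

(* Both filters use the same control inputs, so their predictions differ only
   through the previous means, and the mean error obeys the affine recurrence
   [m_t - m~_t = A_t (m_(t-1) - m~_(t-1)) + B_t + C_t]; unrolling it down to
   [t = 0] gives the formula. *)

Lemma kalman_update_innovation (R : pzRingType) n p (H : 'M[R]_(p, n))
    (K : 'M[R]_(n, p)) (a : 'cV[R]_n) (z : 'cV[R]_p) :
  (1%:M - K *m H) *m a + K *m z = a + K *m (z - H *m a).
Proof. by rewrite mulmxBl mul1mx mulmxBr mulmxA addrAC addrA. Qed.

Lemma kalman_update_subE (R : pzRingType) n k p (F : 'M[R]_n) (B : 'M[R]_(n, k))
    (H : 'M[R]_(p, n)) (K Kt : 'M[R]_(n, p)) (x y : 'cV[R]_n) (v : 'cV[R]_k)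
    (z e : 'cV[R]_p) :
  ((1%:M - K *m H) *m (F *m x + B *m v) + K *m z)
  - ((1%:M - Kt *m H) *m (F *m y + B *m v) + Kt *m (z + e))
  = (F - Kt *m H *m F) *m (x - y)
    + ((K - Kt) *m (z - H *m (F *m x + B *m v)) - Kt *m e).
Proof.
rewrite !kalman_update_innovation.
set a := F *m x + B *m v; set b := F *m y + B *m v.
have -> : (F - Kt *m H *m F) *m (x - y) = (a - b) - Kt *m (H *m (a - b)).
  by rewrite /a /b opprD addrACA subrr addr0 -mulmxBr mulmxBl -!mulmxA.
have -> : z + e - H *m b = (z - H *m a) + H *m (a - b) + e.
  by rewrite mulmxBr addrA subrK addrAC.
set r := z - H *m a; set d := H *m (a - b); clearbody a b r d.
rewrite mulmxBl !mulmxDr !opprD !addrA; congr (_ - _).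
by rewrite (addrAC _ (- (Kt *m r))) (addrAC a) (addrAC (a - b)).
Qed.

Lemma affine_recurrence_unroll (R : pzRingType) n k (A : nat -> 'M[R]_n)
    (c d : nat -> 'M[R]_(n, k)) :
  (forall s, d s.+1 = A s.+1 *m d s + c s.+1) ->
  forall t, d t.+1 = (\prod_(i < t.+1) A (t.+1 - i)%N) *m d 0%N
    + \sum_(i < t) (\prod_(j < i.+1) A (t.+1 - j)%N) *m c (t - i)%N + c t.+1.
Proof.
move=> step; elim=> [|t IH]; first by rewrite step big_ord1 big_ord0 addr0.
have prodS j :
    \prod_(i < j.+1) A (t.+2 - i)%N = A t.+2 *m \prod_(i < j) A (t.+1 - i)%N.
  by rewrite big_ord_recl subn0; congr (_ * _); apply: eq_bigr => i _; rewrite subSS.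
rewrite step {}IH (prodS t.+1) [\sum_(i < t.+1) _]big_ord_recl (prodS 0%N) big_ord0.
rewrite mulmx1 subn0 !mulmxDr mulmx_sumr mulmxA; congr (_ + _).
rewrite -addrA; congr (_ + _); rewrite addrC; congr (_ + _).
by apply: eq_bigr => i _; rewrite lift0 (prodS i.+1) subSS mulmxA.
Qed.

Theorem theorem1 (R : realType) (F B H Rn Q : 'M[R]_2)
  (m0 mt0 : 'cV[R]_2) (S0 St0 : 'M[R]_2)
  (u z eps : nat -> 'cV[R]_2) (t : nat) (ht : (1 <= t)%N) :
  let zt := fun s => z s + eps s in
  let K := kf_gain F H Rn Q S0 in
  let Kt := kf_gain F H Rn Q St0 in
  let m := kf_mean F B H Rn Q S0 m0 u z in
  let mt := kf_mean F B H Rn Q St0 mt0 u zt in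
  let A := fun s => F - Kt s *m H *m F in
  let Bt := fun s => (K s - Kt s) *m (z s - H *m (F *m m (s.-1) + B *m u (s.-1))) in
  let Ct := fun s => - (Kt s *m eps s) in
  m t - mt t =
    (\prod_(i < t) A (t - i)%N) *m (m0 - mt0)
    + \sum_(i < t.-1) (\prod_(j < i.+1) A (t - j)%N) *m (Bt (t.-1 - i)%N + Ct (t.-1 - i)%N)
    + Bt t + Ct t.
Proof.
case: t ht => // t _ zt K Kt m mt A Bt Ct.
rewrite -[_ + Bt t.+1 + _]addrA.
apply: (affine_recurrence_unroll _ _ _ A (fun s => Bt s + Ct s) (fun s => m s - mt s)) => s.
by rewrite /m /mt /= kalman_update_subE.
Qed.
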